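(* Let $\mathcal{A}$ be a commutative $\sigma$-finite W*-algebra or a commutative AW*-algebra, and let $\mathcal{E}$ be a Hilbert C*-module over $\mathcal{A}$ of rank $d$. Let $n\geq d$ and let $\{\tau_j\}_{j=1}^n$ be a collection of vectors in $\mathcal{E}$ with $\langle \tau_j,\tau_j\rangle=1$ for all $1\leq j\leq n$. Then, for every $m\in\mathbb{N}$, \[ \sum_{j=1}^n\sum_{k=1}^n\|\langle \tau_j, \tau_k\rangle \|^{2m}\geq \sum_{j=1}^n\sum_{k=1}^n\langle \tau_j, \tau_k\rangle ^{m}\langle \tau_k, \tau_j\rangle ^{m}\geq \frac{n^2}{{d+m-1\choose m}}, \] in particular \[ \sum_{j=1}^n\sum_{k=1}^n\|\langle \tau_j, \tau_k\rangle \|^{2} \geq \sum_{j=1}^n\sum_{k=1}^n\langle \tau_j, \tau_k\rangle \langle \tau_k, \tau_j\rangle \geq \frac{n^2}{d}. \] Further (for $n\geq 2$), for every $m\in\mathbb{N}$, \[ \max _{1\leq j,k \leq n,\, j\neq k}\|\langle \tau_j, \tau_k\rangle \|^{2m}\geq \frac{1}{n-1}\left[\frac{n}{{d+m-1\choose m}}-1\right], \] and in particular \[ \max _{1\leq j,k \leq n,\, j\neq k}\|\langle \tau_j, \tau_k\rangle \|^{2}\geq\frac{n-d}{d(n-1)}. \]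
   Context: A W*-algebra is $\sigma$-finite if it contains at most countably many mutually orthogonal (nonzero) projections. A C*-algebra is an AW*-algebra if every set of orthogonal projections has a supremum and every maximal commutative self-adjoint subalgebra is generated by its projections. Such algebras are unital, with identity $1$. The $\mathcal{A}$-valued inner product on $\mathcal{E}$ is linear in the first variable and conjugate-linear in the second; $\mathcal{A}$ acts from the left. $\mathcal{E}$ has rank $d$ if it has an orthonormal basis $\{\omega_j\}_{j=1}^d$, i.e. $\langle\omega_j,\omega_k\rangle=\delta_{jk}1$ and $x=\sum_{j=1}^d\langle x,\omega_j\rangle\omega_j$ for all $x\in\mathcal{E}$. Inequalities between elements of $\mathcal{A}$ refer to the order on self-adjoint elements, a real number $c$ being identified with $c\cdot1$; $\|\cdot\|$ is the C*-norm of $\mathcal{A}$. *)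

From mathcomp Require Import all_boot all_order all_algebra.
From mathcomp Require Import reals complex.
Import Order.TTheory GRing.Theory Num.Theory.
Set Implicit Arguments. Unset Strict Implicit. Unset Printing Implicit Defensive.
Local Open Scope ring_scope.

Definition cnorm {R : realType} (l : R[i]) : R := ComplexField.Normc.normc l.

Section CStar.
Variable R : realType.
Variable A : comAlgType R[i].
Variables (nrm : A -> R) (st : A -> A).

Definition nconv (u : nat -> A) (a : A) : Prop :=
  forall eps : R, 0 < eps -> exists N : nat, forall k, (N <= k)%N -> nrm (u k - a) < eps.
Definition ncauchy (u : nat -> A) : Prop :=
  forall eps : R, 0 < eps -> exists N : nat,
    forall k l, (N <= k)%N -> (N <= l)%N -> nrm (u k - u l) < eps.

Definition is_Cstar_algebra : Prop :=
  [/\ [/\ (forall a, 0 <= nrm a), (forall a, nrm a = 0 -> a = 0) &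
      (forall a b, nrm (a + b) <= nrm a + nrm b)],
      (forall (l : R[i]) a, nrm (l *: a) = cnorm l * nrm a),
      ((forall a b, nrm (a * b) <= nrm a * nrm b) /\
       (forall u, ncauchy u -> exists a, nconv u a)),
      [/\ (forall a, st (st a) = a),
          (forall a b, st (a + b) = st a + st b),
          (forall (l : R[i]) a, st (l *: a) = conjc l *: st a) &
          (forall a b, st (a * b) = st b * st a)] &
      (forall a, nrm (st a * a) = nrm a ^+ 2)].

Definition positive (a : A) : Prop := exists b, a = st b * b.
Definition ge_sa (a b : A) : Prop := st a = a /\ st b = b /\ positive (a - b).

Definition projection (p : A) : Prop := p * p = p /\ st p = p.
Definition proj_le (p q : A) : Prop := p * q = p.
Definition orthogonal_family (S : A -> Prop) : Prop :=
  (forall p, S p -> projection p) /\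
  (forall p q, S p -> S q -> p <> q -> p * q = 0).
Definition is_proj_sup (S : A -> Prop) (q : A) : Prop :=
  projection q /\ (forall p, S p -> proj_le p q) /\
  (forall r, projection r -> (forall p, S p -> proj_le p r) -> proj_le q r).

Definition commutative_sa_subalgebra (B : A -> Prop) : Prop :=
  [/\ [/\ B 0, B 1, (forall a b, B a -> B b -> B (a + b)) &
      (forall (l : R[i]) a, B a -> B (l *: a))],
      (forall a b, B a -> B b -> B (a * b)),
      (forall a, B a -> B (st a)) &
      (forall a b, B a -> B b -> a * b = b * a)].
Definition maximal_commutative_sa_subalgebra (B : A -> Prop) : Prop :=
  commutative_sa_subalgebra B /\
  (forall B' : A -> Prop, commutative_sa_subalgebra B' ->
     (forall a, B a -> B' a) -> forall a, B' a -> B a).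
Definition closed_star_subalgebra (B : A -> Prop) : Prop :=
  [/\ [/\ B 0, B 1, (forall a b, B a -> B b -> B (a + b)) &
      (forall (l : R[i]) a, B a -> B (l *: a))],
      (forall a b, B a -> B b -> B (a * b)),
      (forall a, B a -> B (st a)) &
      (forall u a, (forall k, B (u k)) -> nconv u a -> B a)].
Definition generated_by_projections (B : A -> Prop) : Prop :=
  forall D : A -> Prop, closed_star_subalgebra D ->
    (forall p, B p -> projection p -> D p) -> forall a, B a -> D a.

Definition is_AWstar_algebra : Prop :=
  is_Cstar_algebra /\
  (forall S, orthogonal_family S -> exists q, is_proj_sup S q) /\
  (forall B, maximal_commutative_sa_subalgebra B -> generated_by_projections B).

End CStar.

Section HilbertModule.
Variable R : realType.
Variable A : comAlgType R[i].
Variables (nrm : A -> R) (st : A -> A).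
Variable E : lmodType A.
Variable ip : E -> E -> A.

Definition is_Hilbert_module : Prop :=
  [/\ ((forall x y z, ip (x + y) z = ip x z + ip y z) /\
      (forall (a : A) x y, ip (a *: x) y = a * ip x y)),
      (forall x y, st (ip x y) = ip y x),
      (forall x, positive st (ip x x)),
      (forall x, ip x x = 0 -> x = 0) &
      (forall u : nat -> E,
         (forall eps : R, 0 < eps -> exists N : nat, forall k l,
            (N <= k)%N -> (N <= l)%N -> Num.sqrt (nrm (ip (u k - u l) (u k - u l))) < eps) ->
         exists x, forall eps : R, 0 < eps -> exists N : nat, forall k,
            (N <= k)%N -> Num.sqrt (nrm (ip (u k - x) (u k - x))) < eps)].

Definition has_rank (d : nat) : Prop :=
  exists w : 'I_d -> E,
    (forall j k, ip (w j) (w k) = (j == k)%:R) /\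
    (forall x, x = \sum_(j < d) ip x (w j) *: w j).

End HilbertModule.

Definition rone {R : realType} {A : comAlgType R[i]} (r : R) : A :=
  (real_complex R r) *: (1 : A).

From mathcomp Require Import all_boot all_order all_algebra.
From mathcomp Require Import reals complex.
From mathcomp Require Import ring lra.
Import Order.TTheory GRing.Theory Num.Theory.
Set Implicit Arguments. Unset Strict Implicit. Unset Printing Implicit Defensive.
Local Open Scope ring_scope.

(* Positivity is handled through its norm characterisation: a self-adjoint h is
   positive iff ||c - h|| <= c for some c >= ||h||.  This condition is closed
   under sums, every b^* b is a sum of two self-adjoint squares, and for a
   self-adjoint square x^2 it follows from the existence of a self-adjoint
   square root of 1 - x^2 / ||x||^2, obtained by a fixed-point iteration.

   Expanding in the basis, <tau_j, tau_k>^m = sum_f V_j(f) V_k(f)^* with f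
   ranging over maps {1..m} -> {1..d}, so the m-th frame potential is
   sum_{f,g} |S(f,g)|^2 for the frame operator S of the vectors V_j.  Since
   V_j(f) only depends on the multiset of values of f, the blocks of S along
   this partition are constant; the diagonal blocks alone contribute a sum of
   C(d+m-1, m) self-adjoint squares z_t^2 with sum_t z_t = n, which is at
   least n^2 / C(d+m-1, m).  The upper bound comes from
   ||a^m b^m|| = ||b^m||^2 <= ||a||^(2m) for b = a^*, and the bounds on the
   maximum follow because the diagonal terms equal 1. *)

Lemma card_sorted_ord_tuples d m :
  #|[set t : m.-tuple 'I_d | sorted leq (map val t)]| = 'C(d + m - 1, m).
Proof.
case: d => [|d]; last by rewrite card_sorted_tuples addSn subn1 addnC.
case: m => [|m].
  rewrite bin0 -(cards1 ([tuple] : 0.-tuple 'I_0)); apply: eq_card => t.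
  by rewrite !inE [t]tuple0.
rewrite bin_small ?add0n ?subn1 //; apply/eqP; rewrite cards_eq0.
by apply/eqP/setP => t; case: (tnth t ord0).
Qed.

Lemma offdiag_bigmax_ge (R : realFieldType) n (a : 'I_n -> 'I_n -> R) (B : R) :
  (2 <= n)%N -> (forall j, a j j = 1) -> B <= \sum_(j < n) \sum_(k < n) a j k ->
  (n%:R - 1)^-1 * (B / n%:R - 1) <=
    \big[Num.max/0]_(j < n) \big[Num.max/0]_(k < n | j != k) a j k.
Proof.
move=> n_ge2 a_diag le_B.
set M := \big[Num.max/0]_(j < n) _.
have le_aM j k : j != k -> a j k <= M.
  move=> neq_jk; apply: le_trans (le_bigmax_cond 0 (a j) neq_jk) _.
  exact: (le_bigmax 0 (fun j => \big[Num.max/0]_(k < n | j != k) a j k)).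
have le_sum : \sum_(j < n) \sum_(k < n) a j k <= n%:R * (1 + (n%:R - 1) * M).
  have -> : n%:R * (1 + (n%:R - 1) * M) = \sum_(j < n) (1 + (n%:R - 1) * M).
    by rewrite sumr_const card_ord mulr_natl.
  apply: ler_sum => j _; rewrite (bigD1 j) //= a_diag lerD2l.
  have le_row : \sum_(k < n | k != j) a j k <= \sum_(k < n | k != j) M.
    by apply: ler_sum => k neq_kj; apply: le_aM; rewrite eq_sym.
  apply: le_trans le_row _.
  by rewrite sumr_const cardC1 card_ord -(mulr_natl M) -subn1 natrB // (leq_trans _ n_ge2).
have n_gt0 : (0 : R) < n%:R by rewrite ltr0n (leq_trans _ n_ge2).
have n1_gt0 : (0 : R) < n%:R - 1 by rewrite subr_gt0 ltr1n.
rewrite ler_pdivrMl // lerBlDl ler_pdivrMr // mulrC.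
exact: le_trans le_B le_sum.
Qed.

Section CStarAlgebra.
Variables (R : realType) (A : comAlgType R[i]) (nrm : A -> R) (st : A -> A).
Hypothesis HC : is_Cstar_algebra nrm st.
Implicit Types (a b : A) (r s : R).

Lemma nrm_ge0 a : 0 <= nrm a. Proof. by case: HC => -[]. Qed.
Lemma nrm_eq0 a : nrm a = 0 -> a = 0. Proof. by case: HC => -[_ + _] _ _ _ _; apply. Qed.
Lemma nrmD a b : nrm (a + b) <= nrm a + nrm b. Proof. by case: HC => -[]. Qed.
Lemma nrmZ l a : nrm (l *: a) = cnorm l * nrm a. Proof. by case: HC. Qed.
Lemma nrmM a b : nrm (a * b) <= nrm a * nrm b. Proof. by case: HC => _ _ []. Qed.
Lemma nrm_complete u : ncauchy nrm u -> exists a, nconv nrm u a.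
Proof. by case: HC => _ _ [_ +] _ _; apply. Qed.
Lemma stK a : st (st a) = a. Proof. by case: HC => _ _ _ []. Qed.
Lemma stD a b : st (a + b) = st a + st b. Proof. by case: HC => _ _ _ []. Qed.
Lemma stZ l a : st (l *: a) = conjc l *: st a. Proof. by case: HC => _ _ _ []. Qed.
Lemma stM a b : st (a * b) = st b * st a. Proof. by case: HC => _ _ _ []. Qed.
Lemma nrm_stM a : nrm (st a * a) = nrm a ^+ 2. Proof. by case: HC. Qed.

Lemma cnormR (r : R) : cnorm (real_complex R r) = `|r|.
Proof. by rewrite /cnorm /= expr0n /= addr0 sqrtr_sqr. Qed.

Lemma conjcR (r : R) : conjc (real_complex R r) = real_complex R r.
Proof. by rewrite /conjc /= oppr0. Qed.

Lemma st0 : st 0 = 0.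
Proof. by apply: (addrI (st 0)); rewrite -stD !addr0. Qed.

Lemma stN a : st (- a) = - st a.
Proof. by apply/eqP; rewrite -subr_eq0 opprK -stD addNr st0. Qed.

Lemma stB a b : st (a - b) = st a - st b.
Proof. by rewrite stD stN. Qed.

Lemma stMC a b : st (a * b) = st a * st b.
Proof. by rewrite stM mulrC. Qed.

Lemma st1 : st 1 = 1.
Proof. by rewrite -[RHS]stK -[st 1]mulr1 stM stK mulr1. Qed.

Lemma st_sum I (r : seq I) (P : pred I) (F : I -> A) :
  st (\sum_(i <- r | P i) F i) = \sum_(i <- r | P i) st (F i).
Proof. exact: (big_morph st stD st0). Qed.

Lemma st_prod I (r : seq I) (P : pred I) (F : I -> A) :
  st (\prod_(i <- r | P i) F i) = \prod_(i <- r | P i) st (F i).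
Proof. exact: (big_morph st stMC st1). Qed.

Lemma stX a k : st (a ^+ k) = st a ^+ k.
Proof. by elim: k => [|k IH]; rewrite ?expr0 ?st1 // !exprS stMC IH. Qed.

Lemma nrm_st a : nrm (st a) = nrm a.
Proof.
suff le_nrm_st x : nrm x <= nrm (st x) by apply/eqP; rewrite eq_le -{2}(stK a) !le_nrm_st.
have [->|x_neq0] := eqVneq (nrm x) 0; first exact: nrm_ge0.
have x_gt0 : 0 < nrm x by rewrite lt_def x_neq0 nrm_ge0.
by rewrite -(ler_pM2r x_gt0) -expr2 -nrm_stM nrmM.
Qed.

Lemma nrm1 : nrm 1 = 1.
Proof.
have nrm1_neq0 : nrm 1 != 0 by apply/eqP => /nrm_eq0/eqP; rewrite oner_eq0.
by apply: (mulfI nrm1_neq0); rewrite -expr2 -nrm_stM st1 !mulr1.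
Qed.

Lemma roneE : rone = in_alg A \o real_complex R.
Proof. by []. Qed.

Lemma rone0 : rone 0 = 0 :> A. Proof. by rewrite roneE rmorph0. Qed.
Lemma rone1 : rone 1 = 1 :> A. Proof. by rewrite roneE rmorph1. Qed.
Lemma roneD r s : rone (r + s) = rone r + rone s :> A.
Proof. by rewrite roneE rmorphD. Qed.
Lemma roneB r s : rone (r - s) = rone r - rone s :> A.
Proof. by rewrite roneE rmorphB. Qed.
Lemma roneM r s : rone (r * s) = rone r * rone s :> A.
Proof. by rewrite roneE rmorphM. Qed.
Lemma rone_nat k : rone k%:R = k%:R :> A.
Proof. by rewrite roneE rmorph_nat. Qed.
Lemma rone_sum I (r : seq I) (P : pred I) (F : I -> R) :
  rone (\sum_(i <- r | P i) F i) = \sum_(i <- r | P i) rone (F i) :> A.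
Proof. by rewrite roneE rmorph_sum. Qed.

Lemma roneMl r a : rone r * a = real_complex R r *: a.
Proof. by rewrite /rone mulr_algl. Qed.

Lemma nrm_roneMl r a : nrm (rone r * a) = `|r| * nrm a.
Proof. by rewrite roneMl nrmZ cnormR. Qed.

Lemma nrm_rone r : nrm (rone r : A) = `|r|.
Proof. by rewrite -[rone r]mulr1 nrm_roneMl nrm1 mulr1. Qed.

Lemma nrm0 : nrm 0 = 0.
Proof. by rewrite -rone0 nrm_rone normr0. Qed.

Lemma nrmN a : nrm (- a) = nrm a.
Proof. by rewrite -scaleN1r nrmZ -(rmorphN1 (real_complex R)) cnormR normrN1 mul1r. Qed.

Lemma nrm_sum I (r : seq I) (P : pred I) (F : I -> A) :
  nrm (\sum_(i <- r | P i) F i) <= \sum_(i <- r | P i) nrm (F i).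
Proof.
apply: (big_ind2 (fun a s => nrm a <= s)) => //; first by rewrite nrm0.
by move=> a1 s1 a2 s2 h1 h2; exact: le_trans (nrmD _ _) (lerD h1 h2).
Qed.

Lemma nrmX a k : nrm (a ^+ k) <= nrm a ^+ k.
Proof.
elim: k => [|k IH]; first by rewrite !expr0 nrm1.
by rewrite !exprS; apply: le_trans (nrmM _ _) _; rewrite ler_pM ?nrm_ge0.
Qed.

Lemma st_roneMl r a : st (rone r * a) = rone r * st a.
Proof. by rewrite !roneMl stZ conjcR. Qed.

Lemma st_rone r : st (rone r) = rone r :> A.
Proof. by rewrite -[rone r]mulr1 st_roneMl st1. Qed.

Lemma eq0_nrm_le_eps a (c : R) :
  (forall eps, 0 < eps -> nrm a <= eps * c) -> a = 0.
Proof.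
move=> small; apply: nrm_eq0; apply/eqP; rewrite eq_le nrm_ge0 andbT.
apply/ler_addgt0Pr => e e_gt0; rewrite add0r.
have c1_gt0 : 0 < `|c| + 1 by rewrite ltr_wpDl.
apply: le_trans (small _ (divr_gt0 e_gt0 c1_gt0)) _.
by rewrite mulrAC ler_pdivrMr // ler_pM2l // (le_trans (ler_norm c)) // lerDl.
Qed.

(* [sqrt_iter y] converges to the fixed point r = (y + r^2)/2, for which
   (1 - r)^2 = 1 - y; [sqrt_majorant] is the same iteration for y = 1 and
   dominates it in norm. *)
Fixpoint sqrt_iter (y : A) (k : nat) : A :=
  if k is k'.+1 then rone 2^-1 * (y + sqrt_iter y k' ^+ 2) else 0.

Fixpoint sqrt_majorant (k : nat) : R :=
  if k is k'.+1 then 2^-1 * (1 + sqrt_majorant k' ^+ 2) else 0.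

Lemma sqrt_majorant_step (h : R) k :
  0 <= h <= 1 -> (1 - h) * (k%:R + 2) <= 2 ->
  0 <= 2^-1 * (1 + h ^+ 2) <= 1 /\ (1 - 2^-1 * (1 + h ^+ 2)) * (k.+1%:R + 2) <= 2.
Proof.
move=> /andP[h_ge0 h_le1] rate; rewrite -(@natr1 R k).
have k_ge0 : 0 <= (k%:R : R) by [].
have h2_ge0 : 0 <= h ^+ 2 by rewrite sqr_ge0.
have h2_le1 : h ^+ 2 <= 1 by rewrite expr_le1.
split; first by apply/andP; split; lra.
have : 0 <= (2 - (1 - h) * (k%:R + 2)) * (1 + h) by apply: mulr_ge0; lra.
nra.
Qed.

Lemma sqrt_majorant_bounds k :
  0 <= sqrt_majorant k <= 1 /\ (1 - sqrt_majorant k) * (k%:R + 2) <= 2.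
Proof.
elim: k => [|k [h_bounds rate]]; first by rewrite /= lexx ler01; lra.
exact: sqrt_majorant_step.
Qed.

Lemma sqrt_majorant_le1 k : sqrt_majorant k <= 1.
Proof. by case: (sqrt_majorant_bounds k) => /andP[]. Qed.

Lemma sqrt_majorant_near1 eps :
  0 < eps -> exists N, forall k, (N <= k)%N -> 1 - sqrt_majorant k < eps.
Proof.
move=> eps_gt0; exists (Num.truncn (2 / eps)).+1 => k le_Nk.
have k_large : 2 / eps < k%:R by apply: lt_le_trans (truncnS_gt _) _; rewrite ler_nat.
have [_ rate] := sqrt_majorant_bounds k.
have : 2 < k%:R * eps by rewrite -ltr_pdivrMr.
nra.
Qed.

Section SqrtOneSub.
Variable y : A.
Hypotheses (sa_y : st y = y) (nrm_y : nrm y <= 1).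
Local Notation s := (sqrt_iter y).
Local Notation h := sqrt_majorant.

Lemma st_sqrt_iter k : st (s k) = s k.
Proof. by elim: k => [|k IH] /=; rewrite ?st0 // st_roneMl stD stX IH sa_y. Qed.

Lemma nrm_sqrt_iter k : nrm (s k) <= h k.
Proof.
elim: k => [|k IH] /=; first by rewrite nrm0.
rewrite nrm_roneMl ger0_norm ?invr_ge0 // ler_pM2l ?invr_gt0 //.
apply: le_trans (nrmD _ _) (lerD nrm_y _).
apply: le_trans (nrmX _ _) _; rewrite lerXn2r ?nnegrE ?nrm_ge0 //.
exact: le_trans (nrm_ge0 _) IH.
Qed.

Lemma nrm_sqrt_iterS k : nrm (s k.+1 - s k) <= h k.+1 - h k.
Proof.
elim: k => [|k IH].
  rewrite /= !subr0 !expr0n /= !addr0 nrm_roneMl ger0_norm ?invr_ge0 //.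
  by rewrite ler_pM2l ?invr_gt0.
have iterB i j : s j.+1 - s i.+1 = rone 2^-1 * ((s j - s i) * (s j + s i)).
  by rewrite /= -mulrBr; congr (_ * _); ring.
have majorantB i j : h j.+1 - h i.+1 = 2^-1 * ((h j - h i) * (h j + h i)).
  by rewrite /=; ring.
rewrite iterB majorantB nrm_roneMl ger0_norm ?invr_ge0 // ler_pM2l ?invr_gt0 //.
apply: le_trans (nrmM _ _) _; rewrite ler_pM ?nrm_ge0 //.
exact: le_trans (nrmD _ _) (lerD (nrm_sqrt_iter _) (nrm_sqrt_iter _)).
Qed.

Lemma nrm_sqrt_iterB k l : (k <= l)%N -> nrm (s l - s k) <= 1 - h k.
Proof.
move=> le_kl; rewrite -(telescope_sumr _ le_kl).
apply: le_trans (nrm_sum _ _ _) _.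
apply: le_trans (ler_sum _ (fun i _ => nrm_sqrt_iterS i)) _.
by rewrite telescope_sumr // lerD2r sqrt_majorant_le1.
Qed.

Lemma cauchy_sqrt_iter : ncauchy nrm s.
Proof.
move=> eps eps_gt0; have [N near1] := sqrt_majorant_near1 eps_gt0.
exists N => k l le_Nk le_Nl.
have [le_kl|/ltnW le_lk] := leqP k l.
  by rewrite -nrmN opprB; apply: le_lt_trans (nrm_sqrt_iterB le_kl) (near1 _ le_Nk).
exact: le_lt_trans (nrm_sqrt_iterB le_lk) (near1 _ le_Nl).
Qed.

Lemma sa_sqrt_one_sub : exists2 r, st r = r & 1 - y = r * r.
Proof.
have [r lim_r] := nrm_complete cauchy_sqrt_iter.
have sa_r : st r = r.
  apply/eqP; rewrite -subr_eq0; apply/eqP; apply: (@eq0_nrm_le_eps _ 2) => eps eps_gt0.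
  have [N /(_ N (leqnn N))/ltW near] := lim_r eps eps_gt0.
  have -> : st r - r = st (r - s N) + (s N - r) by rewrite stB st_sqrt_iter addrA subrK.
  by apply: le_trans (nrmD _ _) _; rewrite nrm_st -nrmN opprB; lra.
have fixed_r : r *+ 2 = y + r ^+ 2.
  apply/eqP; rewrite eq_sym -subr_eq0; apply/eqP.
  apply: (@eq0_nrm_le_eps _ (4 + 2 * nrm r)) => eps eps_gt0.
  have [N near] := lim_r eps eps_gt0.
  have /ltW nearN := near N (leqnn N); have /ltW nearSN := near N.+1 (leqnSn N).
  have -> : y + r ^+ 2 - r *+ 2 = (s N.+1 - r) *+ 2 + (r - s N) * (s N + r).
    have twice_half (x : A) : (rone 2^-1 * x) *+ 2 = x.
      by rewrite -mulr_natl mulrA -rone_nat -roneM mulfV ?pnatr_eq0 // rone1 mul1r.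
    by rewrite [s N.+1]/= mulrnBl twice_half; ring.
  apply: le_trans (nrmD _ _) _.
  rewrite -(mulr_natl (s N.+1 - r)) -rone_nat nrm_roneMl normr_nat.
  apply: le_trans (lerD (ler_wpM2l _ nearSN) (nrmM _ _)) _; first by [].
  have : nrm (s N + r) <= 1 + nrm r.
    apply: le_trans (nrmD _ _) _.
    by rewrite lerD2r (le_trans (nrm_sqrt_iter N)) ?sqrt_majorant_le1.
  rewrite -nrmN opprB in nearN.
  have := nrm_ge0 (s N + r); have := nrm_ge0 (r - s N); nra.
exists (1 - r); first by rewrite stB st1 sa_r.
have -> : y = r *+ 2 - r ^+ 2 by rewrite fixed_r addrK.
ring.
Qed.

End SqrtOneSub.

Lemma positive_rone_sub a t : st a = a -> nrm a <= t -> positive st (rone t - a).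
Proof.
move=> sa_a le_at; have t_ge0 : 0 <= t := le_trans (nrm_ge0 a) le_at.
have [t0|t_neq0] := eqVneq t 0.
  have -> : a = 0 by apply: nrm_eq0; apply/eqP; rewrite eq_le nrm_ge0 -t0 le_at.
  by exists 0; rewrite t0 rone0 subr0 mulr0.
set y := rone t^-1 * a.
have sa_y : st y = y by rewrite /y st_roneMl sa_a.
have nrm_y : nrm y <= 1.
  by rewrite /y nrm_roneMl ger0_norm ?invr_ge0 // ler_pdivrMl ?mulr1 // lt_def t_neq0.
have [r sa_r def_r] := sa_sqrt_one_sub sa_y nrm_y.
exists (rone (Num.sqrt t) * r); rewrite st_roneMl sa_r.
have -> : rone t - a = rone t * (1 - y).
  by rewrite /y mulrBr mulr1 mulrA -roneM divff // rone1 mul1r.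
by rewrite def_r -[t in rone t](sqr_sqrtr t_ge0) expr2 roneM; ring.
Qed.

Definition norm_positive a :=
  st a = a /\ exists c, nrm a <= c /\ nrm (rone c - a) <= c.

Lemma norm_positiveD a b :
  norm_positive a -> norm_positive b -> norm_positive (a + b).
Proof.
move=> [sa_a [c [le_ac le_ca]]] [sa_b [c' [le_bc' le_c'b]]].
split; first by rewrite stD sa_a sa_b.
exists (c + c'); split; first exact: le_trans (nrmD _ _) (lerD le_ac le_bc').
have -> : rone (c + c') - (a + b) = (rone c - a) + (rone c' - b) by rewrite roneD; ring.
exact: le_trans (nrmD _ _) (lerD le_ca le_c'b).
Qed.

Lemma norm_positiveZ r a : 0 <= r -> norm_positive a -> norm_positive (rone r * a).
Proof.
move=> r_ge0 [sa_a [c [le_ac le_ca]]]; split; first by rewrite st_roneMl sa_a.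
exists (r * c); rewrite nrm_roneMl ger0_norm //; split; first by rewrite ler_wpM2l.
by rewrite roneM -mulrBr nrm_roneMl ger0_norm // ler_wpM2l.
Qed.

Lemma norm_positive_positive a : norm_positive a -> positive st a.
Proof.
move=> [sa_a [c [_ le_ca]]].
have -> : a = rone c - (rone c - a) by rewrite subKr.
by apply: positive_rone_sub => //; rewrite stB st_rone sa_a.
Qed.

Definition imag_unit : A := ('i%C : R[i])%:A.

Lemma imag_unit_sqr : imag_unit * imag_unit = -1.
Proof. by rewrite /imag_unit mulr_algl scalerA -expr2 sqr_i scaleN1r. Qed.

Lemma st_imag_unit : st imag_unit = - imag_unit.
Proof.
rewrite /imag_unit /= stZ st1 -scaleNr; congr (_ *: _).
by apply/eqP; rewrite eq_complex /= oppr0 !eqxx.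
Qed.

Lemma nrm_imag_unitMl a : nrm (imag_unit * a) = nrm a.
Proof.
rewrite /imag_unit mulr_algl nrmZ.
by rewrite /cnorm /= expr0n /= add0r expr1n sqrtr1 mul1r.
Qed.

(* [a + i b] is unitary. *)
Lemma nrm_le1_of_sa_sqr_add_eq1 a b :
  st a = a -> st b = b -> a * a + b * b = 1 -> nrm b <= 1.
Proof.
move=> sa_a sa_b sum1; set u := a + imag_unit * b.
have st_u : st u = a - imag_unit * b by rewrite stD stMC st_imag_unit sa_a sa_b mulNr.
have nrm_u : nrm u <= 1.
  have : nrm u ^+ 2 = 1.
    rewrite -nrm_stM st_u -nrm1 -sum1; congr nrm.
    transitivity (a * a - (imag_unit * imag_unit) * (b * b)); first by rewrite /u; ring.
    by rewrite imag_unit_sqr; ring.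
  by have := nrm_ge0 u; nra.
have : u - st u = 2%:R * (imag_unit * b) by rewrite st_u /u; ring.
move=> /(congr1 nrm); rewrite -rone_nat nrm_roneMl normr_nat nrm_imag_unitMl => twice.
have := nrmD u (- st u); rewrite twice nrmN nrm_st; lra.
Qed.

Lemma norm_positive_sqr x : st x = x -> norm_positive (x * x).
Proof.
move=> sa_x; have [nrm_x0|nrm_x_neq0] := eqVneq (nrm x) 0.
  rewrite (nrm_eq0 nrm_x0) mulr0; split; first exact: st0.
  by exists 0; rewrite rone0 subr0 nrm0.
have nrm_x_gt0 : 0 < nrm x by rewrite lt_def nrm_x_neq0 nrm_ge0.
set x' := rone (nrm x)^-1 * x.
have sa_x' : st x' = x' by rewrite /x' st_roneMl sa_x.
have nrm_x' : nrm x' = 1.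
  by rewrite /x' nrm_roneMl ger0_norm ?invr_ge0 ?nrm_ge0 // mulVf.
have sa_y : st (x' * x') = x' * x' by rewrite stMC sa_x'.
have nrm_y : nrm (x' * x') <= 1 by apply: le_trans (nrmM _ _) _; rewrite nrm_x' mulr1.
have [s sa_s def_s] := sa_sqrt_one_sub sa_y nrm_y.
have nrm_s : nrm s <= 1.
  by apply: (nrm_le1_of_sa_sqr_add_eq1 sa_x' sa_s); rewrite -def_s subrKC.
have def_x : x = rone (nrm x) * x' by rewrite /x' mulrA -roneM mulfV // rone1 mul1r.
have -> : x * x = rone (nrm x ^+ 2) * (x' * x') by rewrite {1 2}def_x mulrACA -roneM -expr2.
apply: norm_positiveZ; first exact: sqr_ge0.
split => //; exists 1; split => //.
by rewrite rone1 def_s -{1}sa_s nrm_stM; have := nrm_ge0 s; nra.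
Qed.

Lemma stMl_sum_sa_sqr b :
  exists x1 x2, [/\ st x1 = x1, st x2 = x2 & st b * b = x1 * x1 + x2 * x2].
Proof.
set half : A := rone 2^-1.
exists (half * (b + st b)), (imag_unit * half * (st b - b)).
split; first by rewrite st_roneMl stD stK addrC.
  by rewrite !stMC st_imag_unit st_rone stB stK; ring.
have quarter : half * half * 4%:R = 1.
  by rewrite /half -rone_nat -!roneM -rone1; congr rone; field.
have -> : imag_unit * half * (st b - b) * (imag_unit * half * (st b - b)) =
          - (half * half * ((st b - b) * (st b - b))).
  by rewrite -[RHS]mulN1r -imag_unit_sqr; ring.
by rewrite -[LHS]mul1r -quarter; ring.
Qed.

Lemma positive_norm_positive a : positive st a -> norm_positive a.
Proof.
move=> [b ->]; have [x1 [x2 [sa1 sa2 ->]]] := stMl_sum_sa_sqr b.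
by apply: norm_positiveD; apply: norm_positive_sqr.
Qed.

Lemma positiveD a b : positive st a -> positive st b -> positive st (a + b).
Proof.
move=> /positive_norm_positive pos_a /positive_norm_positive pos_b.
exact/norm_positive_positive/norm_positiveD.
Qed.

Lemma positive_sum I (r : seq I) (P : pred I) (F : I -> A) :
  (forall i, P i -> positive st (F i)) -> positive st (\sum_(i <- r | P i) F i).
Proof.
move=> pos_F; apply: big_ind => //; last exact: positiveD.
by exists 0; rewrite mulr0.
Qed.

Lemma positive_rone_ge0 r : positive st (rone r) -> 0 <= r.
Proof.
move=> /positive_norm_positive [_ [c []]].
rewrite -roneB !nrm_rone => le_rc le_rcr.
rewrite leNgt; apply/negP => r_lt0.
by rewrite ltr0_norm // in le_rc; rewrite ger0_norm in le_rcr; lra.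
Qed.

(* Valid also for empty [P], where [x / 0 = 0]. *)
Lemma positive_sum_sqr_sub (I : finType) (P : {pred I}) (z : I -> A) s :
  (forall i, st (z i) = z i) -> \sum_(i in P) z i = rone s ->
  positive st (\sum_(i in P) z i * z i - rone (s ^+ 2 / #|P|%:R)).
Proof.
move=> sa_z sum_z; set C := #|P|; set q : A := rone (s / C%:R).
have -> : \sum_(i in P) z i * z i - rone (s ^+ 2 / C%:R) =
          \sum_(i in P) (z i - q) * (z i - q).
  have expand i : (z i - q) * (z i - q) = z i * z i - (q *+ 2 * z i - q * q) by ring.
  rewrite (eq_bigr _ (fun i _ => expand i)) !sumrB -mulr_sumr sum_z sumr_const -/C.
  congr (_ - _); rewrite -(mulr_natl (q * q)) -(mulr_natl q) /q -!rone_nat -!roneM -roneB.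
  congr rone.
  have [->|C_neq0] := eqVneq (C%:R : R) 0; first by rewrite !invr0 !mulr0 !mul0r subrr.
  by field.
apply: positive_sum => i _; exists (z i - q).
by rewrite stB sa_z st_rone.
Qed.

Lemma positive_rone_nrm_sqrX_sub a k :
  positive st (rone (nrm a ^+ (2 * k)) - a ^+ k * st a ^+ k).
Proof.
apply: positive_rone_sub; first by rewrite stMC !stX stK mulrC.
have -> : a ^+ k * st a ^+ k = st (st a ^+ k) * st a ^+ k by rewrite stX stK.
rewrite nrm_stM mulnC exprM lerXn2r ?nnegrE ?nrm_ge0 ?exprn_ge0 ?nrm_ge0 //.
by rewrite -(nrm_st a) nrmX.
Qed.

Section HilbertModule.
Variables (E : lmodType A) (ip : E -> E -> A).
Hypothesis HH : is_Hilbert_module nrm st ip.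
Variables (d : nat) (w : 'I_d -> E).
Hypothesis w_reconstruct : forall x, x = \sum_(l < d) ip x (w l) *: w l.

Lemma ipDl x y z : ip (x + y) z = ip x z + ip y z. Proof. by case: HH => -[]. Qed.
Lemma ipZl a x y : ip (a *: x) y = a * ip x y. Proof. by case: HH => -[]. Qed.
Lemma st_ip x y : st (ip x y) = ip y x. Proof. by case: HH. Qed.

Lemma ip_suml I (r : seq I) (P : pred I) (F : I -> E) z :
  ip (\sum_(i <- r | P i) F i) z = \sum_(i <- r | P i) ip (F i) z.
Proof.
have ip0l : ip 0 z = 0 by rewrite -(scale0r (0 : E)) ipZl mul0r.
exact: (big_morph (ip^~ z) (fun x y => ipDl x y z) ip0l).
Qed.

Lemma ip_expand x y : ip x y = \sum_(l < d) ip x (w l) * st (ip y (w l)).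
Proof.
rewrite {1}(w_reconstruct x) ip_suml; apply: eq_bigr => l _.
by rewrite ipZl st_ip.
Qed.

Section TensorPower.
Variable m : nat.
Implicit Type f : {ffun 'I_m -> 'I_d}.

Definition tcoord x f := \prod_(i < m) ip x (w (f i)).

Lemma ip_expn x y : ip x y ^+ m = \sum_f tcoord x f * st (tcoord y f).
Proof.
rewrite ip_expand -[m in LHS]card_ord -prodr_const bigA_distr_bigA.
by apply: eq_bigr => f _; rewrite /tcoord st_prod -big_split.
Qed.

Definition msort f : m.-tuple 'I_d := sort_tuple (relpre val leq) (mktuple f).

Definition msets := [set t : m.-tuple 'I_d | sorted leq (map val t)].

Lemma msort_msets f : msort f \in msets.
Proof. by rewrite inE sorted_map sort_sorted // => i j; exact: leq_total. Qed.

Definition mcoord x (t : m.-tuple 'I_d) := \prod_(l <- t) ip x (w l).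

Lemma tcoord_msort x f : tcoord x f = mcoord x (msort f).
Proof.
rewrite /mcoord /= (perm_big (mktuple f)); last by rewrite perm_sort.
by rewrite big_map big_enum.
Qed.

Variables (n : nat) (tau : 'I_n -> E).
Local Notation V k := (tcoord (tau k)).

Definition frame_potential :=
  \sum_(j < n) \sum_(k < n) ip (tau j) (tau k) ^+ m * ip (tau k) (tau j) ^+ m.

Lemma st_frame_potential : st frame_potential = frame_potential.
Proof.
rewrite st_sum; apply: eq_bigr => j _; rewrite st_sum; apply: eq_bigr => k _.
by rewrite stMC !stX !st_ip mulrC.
Qed.

Lemma frame_potential_le :
  positive st (rone (\sum_(j < n) \sum_(k < n) nrm (ip (tau j) (tau k)) ^+ (2 * m))
               - frame_potential).
Proof.
rewrite rone_sum -sumrB; apply: positive_sum => j _.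
rewrite rone_sum -sumrB; apply: positive_sum => k _.
by rewrite -[ip (tau k) (tau j)]st_ip; apply: positive_rone_nrm_sqrX_sub.
Qed.

Definition tframe_op f g := \sum_(k < n) st (V k f) * V k g.

Lemma frame_potential_tframe_op :
  frame_potential = \sum_f \sum_g st (tframe_op f g) * tframe_op f g.
Proof.
transitivity (\sum_j \sum_k \sum_f \sum_g
    (V j f * st (V j g)) * (st (V k f) * V k g)).
  apply: eq_bigr => j _; apply: eq_bigr => k _.
  rewrite !ip_expn big_distrlr; apply: eq_bigr => f _; apply: eq_bigr => g _ /=.
  ring.
transitivity (\sum_j \sum_f \sum_g \sum_k
    (V j f * st (V j g)) * (st (V k f) * V k g)).
  apply: eq_bigr => j _; rewrite exchange_big; apply: eq_bigr => f _.
  exact: exchange_big.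
rewrite exchange_big; apply: eq_bigr => f _; rewrite exchange_big; apply: eq_bigr => g _.
rewrite /tframe_op st_sum big_distrlr; apply: eq_bigr => j _; apply: eq_bigr => k _.
by rewrite stMC stK.
Qed.

Hypothesis tau_unit : forall j, ip (tau j) (tau j) = 1.

Definition mweight t := \sum_(k < n) st (mcoord (tau k) t) * mcoord (tau k) t.

Definition class_weight t := \sum_(f | msort f == t) mweight t.

Lemma st_mweight t : st (mweight t) = mweight t.
Proof. by rewrite st_sum; apply: eq_bigr => k _; rewrite stMC stK mulrC. Qed.

Lemma st_class_weight t : st (class_weight t) = class_weight t.
Proof. by rewrite st_sum; apply: eq_bigr => f _; rewrite st_mweight. Qed.

Lemma tframe_op_msort f g :
  tframe_op f g = \sum_(k < n) st (mcoord (tau k) (msort f)) * mcoord (tau k) (msort g).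
Proof. by apply: eq_bigr => k _; rewrite !tcoord_msort. Qed.

Lemma sum_class_weight : \sum_(t in msets) class_weight t = n%:R.
Proof.
transitivity (\sum_f mweight (msort f)).
  rewrite [RHS](partition_big msort (mem msets)) /=; last by move=> f _; exact: msort_msets.
  by apply: eq_bigr => t _; apply: eq_bigr => f /eqP ->.
transitivity (\sum_f tframe_op f f).
  by apply: eq_bigr => f _; rewrite tframe_op_msort.
have -> : n%:R = \sum_(k < n) 1 :> A by rewrite sumr_const card_ord.
rewrite exchange_big; apply: eq_bigr => k _.
rewrite -(expr1n _ m) -(tau_unit k) ip_expn; apply: eq_bigr => f _.
by rewrite mulrC.
Qed.

Lemma sum_diag_tframe_op :
  \sum_f \sum_(g | msort g == msort f) st (tframe_op f g) * tframe_op f g =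
  \sum_(t in msets) class_weight t * class_weight t.
Proof.
rewrite (partition_big msort (mem msets)) /=; last by move=> f _; exact: msort_msets.
apply: eq_bigr => t _; rewrite big_distrlr; apply: eq_bigr => f /eqP def_t.
rewrite def_t; apply: eq_bigr => g /eqP def_t'.
by rewrite tframe_op_msort def_t def_t' st_mweight.
Qed.

Lemma frame_potential_ge :
  positive st (frame_potential - rone ((n ^ 2)%:R / ('C(d + m - 1, m))%:R)).
Proof.
have sum_cw : \sum_(t in msets) class_weight t = rone n%:R.
  by rewrite rone_nat sum_class_weight.
have := positive_sum_sqr_sub st_class_weight sum_cw.
rewrite card_sorted_ord_tuples -natrX -sum_diag_tframe_op => diag_ge.
rewrite frame_potential_tframe_op.
rewrite (eq_bigr _ (fun f _ => bigID (fun g => msort g == msort f) _ _)) big_split /=.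
rewrite addrAC; apply: positiveD diag_ge _.
by apply: positive_sum => f _; apply: positive_sum => g _; exists (tframe_op f g).
Qed.

Lemma sum_nrm_ip_ge :
  (n ^ 2)%:R / ('C(d + m - 1, m))%:R <=
    \sum_(j < n) \sum_(k < n) nrm (ip (tau j) (tau k)) ^+ (2 * m).
Proof.
rewrite -subr_ge0; apply: positive_rone_ge0; rewrite roneB.
by have := positiveD frame_potential_le frame_potential_ge; rewrite addrA subrK.
Qed.

Lemma offdiag_max_nrm_ip_ge : (2 <= n)%N ->
  (n%:R - 1)^-1 * (n%:R / ('C(d + m - 1, m))%:R - 1) <=
    \big[Num.max/0]_(j < n) \big[Num.max/0]_(k < n | j != k)
      nrm (ip (tau j) (tau k)) ^+ (2 * m).
Proof.
move=> n_ge2.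
have n_neq0 : (n%:R : R) != 0 by rewrite pnatr_eq0 -lt0n (leq_trans _ n_ge2).
have -> : n%:R / ('C(d + m - 1, m))%:R = (n ^ 2)%:R / ('C(d + m - 1, m))%:R / n%:R :> R.
  by rewrite natrX mulrAC expr2 mulfK.
apply: offdiag_bigmax_ge n_ge2 _ sum_nrm_ip_ge => j.
by rewrite tau_unit nrm1 expr1n.
Qed.

End TensorPower.
End HilbertModule.
End CStarAlgebra.

Theorem theorem2p13 (R : realType) (A : comAlgType R[i]) (nrm : A -> R) (st : A -> A)
  (E : lmodType A) (ip : E -> E -> A) (d n : nat) (tau : 'I_n -> E) :
  is_AWstar_algebra nrm st ->
  is_Hilbert_module nrm st ip ->
  has_rank ip d ->
  (d <= n)%N ->
  (forall j, ip (tau j) (tau j) = 1) ->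
  (forall m : nat, (0 < m)%N ->
     ge_sa st (rone (\sum_(j < n) \sum_(k < n) nrm (ip (tau j) (tau k)) ^+ (2 * m)))
              (\sum_(j < n) \sum_(k < n) ip (tau j) (tau k) ^+ m * ip (tau k) (tau j) ^+ m)
     /\
     ge_sa st (\sum_(j < n) \sum_(k < n) ip (tau j) (tau k) ^+ m * ip (tau k) (tau j) ^+ m)
              (rone ((n ^ 2)%:R / ('C(d + m - 1, m))%:R : R)))
  /\
  (ge_sa st (rone (\sum_(j < n) \sum_(k < n) nrm (ip (tau j) (tau k)) ^+ 2))
            (\sum_(j < n) \sum_(k < n) ip (tau j) (tau k) * ip (tau k) (tau j))
   /\
   ge_sa st (\sum_(j < n) \sum_(k < n) ip (tau j) (tau k) * ip (tau k) (tau j))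
            (rone ((n ^ 2)%:R / d%:R : R)))
  /\
  ((2 <= n)%N ->
     (forall m : nat, (0 < m)%N ->
        \big[Num.max/0]_(j < n) \big[Num.max/0]_(k < n | j != k)
            nrm (ip (tau j) (tau k)) ^+ (2 * m)
        >= (n%:R - 1)^-1 * (n%:R / ('C(d + m - 1, m))%:R - 1))
     /\
     \big[Num.max/0]_(j < n) \big[Num.max/0]_(k < n | j != k)
         nrm (ip (tau j) (tau k)) ^+ 2
     >= (n%:R - d%:R) / (d%:R * (n%:R - 1))).
Proof.
move=> [HC _] HH [w [_ w_reconstruct]] _ tau_unit.
have potential_le m : ge_sa st
    (rone (\sum_(j < n) \sum_(k < n) nrm (ip (tau j) (tau k)) ^+ (2 * m)))
    (frame_potential ip m tau).
  split; first exact: (st_rone HC).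
  by split; [exact: (st_frame_potential HC HH) | exact: (frame_potential_le HC HH)].
have potential_ge m : ge_sa st (frame_potential ip m tau)
    (rone ((n ^ 2)%:R / ('C(d + m - 1, m))%:R : R)).
  split; first exact: (st_frame_potential HC HH).
  by split; [exact: (st_rone HC) | exact: (frame_potential_ge HC HH w_reconstruct)].
split; first by move=> m _; split; [exact: potential_le | exact: potential_ge].
split; first by have := conj (potential_le 1%N) (potential_ge 1%N); rewrite addnK bin1.
have max_ge m := offdiag_max_nrm_ip_ge HC HH w_reconstruct m tau_unit.
move=> n_ge2; split=> [m _|]; first exact: max_ge.
have [->|d_gt0] := posnP d; first by rewrite mul0r invr0 mulr0; apply: bigmax_ge_id.
apply: le_trans (max_ge 1%N n_ge2); rewrite addnK bin1 le_eqVlt; apply/orP; left.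
have d_neq0 : (d%:R : R) != 0 by rewrite pnatr_eq0 -lt0n.
have n1_neq0 : (n%:R - 1 : R) != 0 by rewrite subr_eq0 pnatr_eq1 gtn_eqF.
by apply/eqP; field; rewrite d_neq0 n1_neq0.
Qed.
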